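(* Let $\Lambda$ be any of the logics $K$, $T$, $K4$, $K5$, $S4$, $S5$. A formula $\varphi$ of the language $\mathcal{L}^{+}$ is true at every world of every $\Lambda$-model if and only if $\varphi$ is derivable in the proof system $\Lambda+\mathrm{Ax}$ described below.
   Context: Fix a countable non-empty set $\mathit{At}$ of atoms. A literal is an atom or its negation; a clause is a finite set $D$ of literals read as $\bigvee D$ ($\bigvee\varnothing:=\bot$); it is tautological if it contains $p$ and $\lnot p$ for some $p$. For propositional $\pi$, $\mathcal{C}(\pi)$ is the (finite) set of non-tautological clauses $D$ with $\models\pi\to\bigvee D$ and no $D'\subsetneq D$ with $\models\pi\to\bigvee D'$. Language $\mathcal{L}^{+}$: formulas built from $\top$, atoms $p$, $\lnot$, $\land$, $\Box$, operators $[\ddagger\pi]$ for each propositional formula $\pi$, and operators $[D_1,D_2]_i$ for $i\in\{0,1,2\}$ and any finite non-tautological clauses $D_1,D_2$; other connectives defined as usual. Models: $\mathcal{M}=\langle W,R,V\rangle$, $W\neq\varnothing$, $R\subseteq W\times W$, $V:\mathit{At}\to\mathcal{P}(W)$, standard semantics for atoms, Booleans and $\Box$. For finite non-tautological clauses $D_1,D_2$, the model $\mathcal{M}^{(D_1,D_2)}=\langle W',R',V'\rangle$ has $W'=W\times\{0,1,2\}$, $(w,i)R'(v,j)$ iff $wRv$, $(w,0)\in V'(p)$ iff $w\in V(p)$, and for $i\in\{1,2\}$: $(w,i)\in V'(p)$ iff $\lnot p\in D_i$, or $\{p,\lnot p\}\cap D_i=\varnothing$ and $w\in V(p)$. Semantics: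 $\mathcal{M},w\models[D_1,D_2]_i\varphi$ iff $\mathcal{M}^{(D_1,D_2)},(w,i)\models\varphi$; $\mathcal{M},w\models[\ddagger\pi]\varphi$ iff for all $D_1\in\mathcal{C}(\pi)$ and $D_2\in\mathcal{C}(\lnot\pi)$, $\mathcal{M}^{(D_1,D_2)},(w,0)\models\varphi$. $\Lambda$-models: $K$: all models; $T$: reflexive $R$; $K4$: transitive; $K5$: euclidean; $S4$: reflexive and transitive; $S5$: equivalence relation. The proof system $\Lambda$ (over $\mathcal{L}^{+}$) consists of all instances in $\mathcal{L}^{+}$ of propositional tautologies, the distribution axiom $\Box(\varphi\to\psi)\to(\Box\varphi\to\Box\psi)$, modus ponens and necessitation (from $\varphi$ infer $\Box\varphi$), together with, as appropriate, $\Box\varphi\to\varphi$ (for $T,S4,S5$), $\Box\varphi\to\Box\Box\varphi$ (for $K4,S4,S5$) and $\lnot\Box\varphi\to\Box\lnot\Box\varphi$ (for $K5,S5$). $\mathrm{Ax}$ consists of the following, for all propositional $\pi$, all finite non-tautological clauses $D_1,D_2$, all atoms $p$, all formulas $\varphi,\psi$, and with $[\,\cdot\,]$ ranging over $[D_1,D_2]_0,[D_1,D_2]_1,[D_1,D_2]_2$: (1) $[\ddagger\pi]\varphi\leftrightarrow\bigwedge_{D_1\in\mathcal{C}(\pi)}\bigwedge_{D_2\in\mathcal{C}(\lnot\pi)}[D_1,D_2]_0\varphi$; (2) $[D_1,D_2]_0p\leftrightarrow p$; (3) for $j\in\{1,2\}$: $[D_1,D_2]_jp\leftrightarrow p$ if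 $\{p,\lnot p\}\cap D_j=\varnothing$; $[D_1,D_2]_jp\leftrightarrow\top$ if $\lnot p\in D_j$; $[D_1,D_2]_jp\leftrightarrow\bot$ if $p\in D_j$; (4) $[\,\cdot\,]\lnot\varphi\leftrightarrow\lnot[\,\cdot\,]\varphi$; (5) $[\,\cdot\,](\varphi\land\psi)\leftrightarrow([\,\cdot\,]\varphi\land[\,\cdot\,]\psi)$; (6) $[\,\cdot\,]\Box\varphi\leftrightarrow\Box([D_1,D_2]_0\varphi\land[D_1,D_2]_1\varphi\land[D_1,D_2]_2\varphi)$; (7) $[\,\cdot\,](\varphi\to\psi)\to([\,\cdot\,]\varphi\to[\,\cdot\,]\psi)$; (8) the rule: from $\vdash\varphi$ infer $\vdash[\,\cdot\,]\varphi$. *)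

From mathcomp Require Import all_boot.
From mathcomp Require Import finmap.
From Stdlib Require List.

Set Implicit Arguments.
Unset Strict Implicit.
Unset Printing Implicit Defensive.

Local Open Scope fset_scope.

Section Syntax.
Variable At : countType.

Inductive pform (A : Type) : Type :=
| PTop : pform A
| PAtom : A -> pform A
| PNeg : pform A -> pform A
| PAnd : pform A -> pform A -> pform A.

Fixpoint peval (A : Type) (v : A -> bool) (p : pform A) : bool :=
  match p with
  | PTop => true
  | PAtom a => v a
  | PNeg q => ~~ peval v q
  | PAnd q r => peval v q && peval v r
  end.

(** Literals: (true, p) is the atom p, (false, p) is its negation ~p. *)
Definition lit : Type := (bool * At)%type.
Definition lneg (l : lit) : lit := (~~ l.1, l.2).
Definition litval (v : At -> bool) (l : lit) : bool :=
  if l.1 then v l.2 else ~~ v l.2.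

Definition clause : Type := {fset lit}.
Definition tautological (D : clause) : bool :=
  has (fun l => lneg l \in D) (enum_fset D).

Record ntclause : Type := NTC { ntc :> clause ; ntc_ok : ~~ tautological ntc }.

Definition entails (pi : pform At) (D : clause) : Prop :=
  forall v : At -> bool, peval v pi -> exists2 l, l \in D & litval v l.

Definition inC (pi : pform At) (D : ntclause) : Prop :=
  entails pi D /\ (forall D' : clause, D' `<` (D : clause) -> ~ entails pi D').

Inductive idx : Type := I0 | I1 | I2.

Inductive form : Type :=
| FTop : form
| FAtom : At -> form
| FNeg : form -> form
| FAnd : form -> form -> form
| FBox : form -> form
| FDyn : pform At -> form -> form
| FUpd : ntclause -> ntclause -> idx -> form -> form.

Definition FBot : form := FNeg FTop.
Definition FImp (a b : form) : form := FNeg (FAnd a (FNeg b)).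
Definition FIff (a b : form) : form := FAnd (FImp a b) (FImp b a).
Definition bigAnd (s : seq form) : form := foldr FAnd FTop s.

Fixpoint inst (sigma : nat -> form) (t : pform nat) : form :=
  match t with
  | PTop => FTop
  | PAtom n => sigma n
  | PNeg q => FNeg (inst sigma q)
  | PAnd q r => FAnd (inst sigma q) (inst sigma r)
  end.

Definition ptautology (t : pform nat) : Prop := forall v : nat -> bool, peval v t.

End Syntax.

Arguments PTop {A}.
Arguments FTop {At}.
Arguments FBot {At}.

Unset Implicit Arguments.

Record model (At : Type) : Type := Model {
  mworld : Type;
  mrel : mworld -> mworld -> Prop;
  mval : At -> mworld -> Prop }.
Arguments mval {At} m _ _.
Arguments mrel {At} m _ _.
Arguments mworld {At} m.
Arguments Model {At} mworld mrel mval.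

Definition upd_val (At : countType) (M : model At) (D1 D2 : ntclause At)
  (p : At) (x : mworld M * idx) : Prop :=
  match x.2 with
  | I0 => mval M p x.1
  | I1 => ((false, p) \in (D1 : clause At)) \/
          (((true, p) \notin (D1 : clause At)) /\ ((false, p) \notin (D1 : clause At)) /\ mval M p x.1)
  | I2 => ((false, p) \in (D2 : clause At)) \/
          (((true, p) \notin (D2 : clause At)) /\ ((false, p) \notin (D2 : clause At)) /\ mval M p x.1)
  end.

Definition upd_model (At : countType) (M : model At) (D1 D2 : ntclause At) : model At :=
  Model (mworld M * idx)%type (fun x y => mrel M x.1 y.1) (upd_val At M D1 D2).

Fixpoint sat (At : countType) (M : model At) (w : mworld M) (phi : form At) {struct phi} : Prop :=
  match phi with
  | FTop => True
  | FAtom p => mval M p w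
  | FNeg a => ~ sat At M w a
  | FAnd a b => sat At M w a /\ sat At M w b
  | FBox a => forall v, mrel M w v -> sat At M v a
  | FDyn pi a => forall D1 D2 : ntclause At, inC pi D1 -> inC (PNeg pi) D2 ->
                   sat At (upd_model At M D1 D2) (w, I0) a
  | FUpd D1 D2 i a => sat At (upd_model At M D1 D2) (w, i) a
  end.

Inductive logic : Type := LK | LT | LK4 | LK5 | LS4 | LS5.

Definition reflexive_rel (W : Type) (R : W -> W -> Prop) := forall w, R w w.
Definition transitive_rel (W : Type) (R : W -> W -> Prop) :=
  forall u v w, R u v -> R v w -> R u w.
Definition euclidean_rel (W : Type) (R : W -> W -> Prop) :=
  forall u v w, R u v -> R u w -> R v w.
Definition symmetric_rel (W : Type) (R : W -> W -> Prop) := forall u v, R u v -> R v u.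

Definition frame_cond (L : logic) (W : Type) (R : W -> W -> Prop) : Prop :=
  match L with
  | LK => True
  | LT => reflexive_rel W R
  | LK4 => transitive_rel W R
  | LK5 => euclidean_rel W R
  | LS4 => reflexive_rel W R /\ transitive_rel W R
  | LS5 => reflexive_rel W R /\ symmetric_rel W R /\ transitive_rel W R
  end.

Definition has_T (L : logic) : bool := match L with LT | LS4 | LS5 => true | _ => false end.
Definition has_4 (L : logic) : bool := match L with LK4 | LS4 | LS5 => true | _ => false end.
Definition has_5 (L : logic) : bool := match L with LK5 | LS5 => true | _ => false end.

Definition valid_in (At : countType) (L : logic) (phi : form At) : Prop :=
  forall M : model At, inhabited (mworld M) -> frame_cond L (mworld M) (mrel M) ->
    forall w : mworld M, sat At M w phi.

Definition enumerates (At : countType) (P : ntclause At -> Prop) (s : seq (ntclause At)) : Prop :=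
  List.NoDup s /\ forall D, List.In D s <-> P D.

Inductive derivable (At : countType) (L : logic) : form At -> Prop :=
| d_taut (t : pform nat) (sigma : nat -> form At) :
    ptautology t -> derivable At L (inst sigma t)
| d_K (a b : form At) :
    derivable At L (FImp (FBox (FImp a b)) (FImp (FBox a) (FBox b)))
| d_MP (a b : form At) :
    derivable At L (FImp a b) -> derivable At L a -> derivable At L b
| d_Nec (a : form At) : derivable At L a -> derivable At L (FBox a)
| d_T (a : form At) : has_T L -> derivable At L (FImp (FBox a) a)
| d_4 (a : form At) : has_4 L -> derivable At L (FImp (FBox a) (FBox (FBox a)))
| d_5 (a : form At) : has_5 L ->
    derivable At L (FImp (FNeg (FBox a)) (FBox (FNeg (FBox a))))
| d_ax1 (pi : pform At) (a : form At) (s1 s2 : seq (ntclause At)) :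
    enumerates At (inC pi) s1 -> enumerates At (inC (PNeg pi)) s2 ->
    derivable At L (FIff (FDyn pi a)
      (bigAnd [seq bigAnd [seq FUpd D1 D2 I0 a | D2 <- s2] | D1 <- s1]))
| d_ax2 (D1 D2 : ntclause At) (p : At) :
    derivable At L (FIff (FUpd D1 D2 I0 (FAtom p)) (FAtom p))
| d_ax3_1a (D1 D2 : ntclause At) (p : At) :
    (true, p) \notin (D1 : clause At) -> (false, p) \notin (D1 : clause At) ->
    derivable At L (FIff (FUpd D1 D2 I1 (FAtom p)) (FAtom p))
| d_ax3_1b (D1 D2 : ntclause At) (p : At) :
    (false, p) \in (D1 : clause At) ->
    derivable At L (FIff (FUpd D1 D2 I1 (FAtom p)) FTop)
| d_ax3_1c (D1 D2 : ntclause At) (p : At) :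
    (true, p) \in (D1 : clause At) ->
    derivable At L (FIff (FUpd D1 D2 I1 (FAtom p)) FBot)
| d_ax3_2a (D1 D2 : ntclause At) (p : At) :
    (true, p) \notin (D2 : clause At) -> (false, p) \notin (D2 : clause At) ->
    derivable At L (FIff (FUpd D1 D2 I2 (FAtom p)) (FAtom p))
| d_ax3_2b (D1 D2 : ntclause At) (p : At) :
    (false, p) \in (D2 : clause At) ->
    derivable At L (FIff (FUpd D1 D2 I2 (FAtom p)) FTop)
| d_ax3_2c (D1 D2 : ntclause At) (p : At) :
    (true, p) \in (D2 : clause At) ->
    derivable At L (FIff (FUpd D1 D2 I2 (FAtom p)) FBot)
| d_ax4 (D1 D2 : ntclause At) (i : idx) (a : form At) :
    derivable At L (FIff (FUpd D1 D2 i (FNeg a)) (FNeg (FUpd D1 D2 i a)))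
| d_ax5 (D1 D2 : ntclause At) (i : idx) (a b : form At) :
    derivable At L (FIff (FUpd D1 D2 i (FAnd a b))
                      (FAnd (FUpd D1 D2 i a) (FUpd D1 D2 i b)))
| d_ax6 (D1 D2 : ntclause At) (i : idx) (a : form At) :
    derivable At L (FIff (FUpd D1 D2 i (FBox a))
      (FBox (FAnd (FUpd D1 D2 I0 a) (FAnd (FUpd D1 D2 I1 a) (FUpd D1 D2 I2 a)))))
| d_ax7 (D1 D2 : ntclause At) (i : idx) (a b : form At) :
    derivable At L (FImp (FUpd D1 D2 i (FImp a b))
                      (FImp (FUpd D1 D2 i a) (FUpd D1 D2 i b)))
| d_nec_upd (D1 D2 : ntclause At) (i : idx) (a : form At) :
    derivable At L a -> derivable At L (FUpd D1 D2 i a).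

(* Soundness: the model M^(D1,D2) keeps the accessibility relation of M on
   first coordinates, so it satisfies every frame condition M does, and each
   axiom is then checked directly.
   Completeness: axioms (1)-(6) are reduction axioms.  Pushing a stack of
   pending updates through a formula turns it into a provably equivalent
   update-free formula; under a stack of n updates a box becomes a box over
   the conjunction of the 3^n ways of re-choosing the indices of the stack,
   and an atom becomes the atom, top or bottom.  For update-free formulas
   the usual canonical-model argument applies, with maximal consistent sets
   of update-free formulas; the axioms T, 4, 5 make its relation reflexive,
   transitive and euclidean. *)

From HB Require Import structures.
From mathcomp Require Import all_boot finmap.
From Stdlib Require Import Classical ClassicalEpsilon.
From Stdlib Require List.

Set Implicit Arguments.
Unset Strict Implicit.
Unset Printing Implicit Defensive.

Definition classicb (P : Prop) : bool :=
  if excluded_middle_informative P then true else false.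

Lemma classicbP (P : Prop) : classicb P <-> P.
Proof. by rewrite /classicb; case: excluded_middle_informative. Qed.

Lemma mem_In (T : eqType) (x : T) (s : seq T) : x \in s -> List.In x s.
Proof. by elim: s => //= y s IH; rewrite inE => /orP [/eqP ->|/IH]; [left|right]. Qed.

Lemma In_map (A B : Type) (f : A -> B) (l : seq A) y :
  List.In y (map f l) <-> exists x, f x = y /\ List.In x l.
Proof. exact: List.in_map_iff. Qed.

Lemma In_map_of (A B : Type) (f : A -> B) (l : seq A) x :
  List.In x l -> List.In (f x) (map f l).
Proof. exact: List.in_map. Qed.

(** * Propositional reasoning in the proof system *)

Definition pimp (x y : pform nat) : pform nat := PNeg (PAnd x (PNeg y)).
Definition piff (x y : pform nat) : pform nat := PAnd (pimp x y) (pimp y x).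

Section PropositionalRules.
Variables (At : countType) (L : logic).
Local Notation "|- a" := (derivable At L a) (at level 70).
Implicit Types a b c d : form At.

Definition subst_list (l : seq (form At)) (n : nat) : form At := nth FTop l n.

Lemma taut_rule (hs : seq (pform nat)) (c : pform nat) (l : seq (form At)) :
  ptautology (foldr pimp c hs) ->
  (forall h, List.In h hs -> |- inst (subst_list l) h) -> |- inst (subst_list l) c.
Proof.
move=> /(d_taut At L _ (subst_list l)); elim: hs => [//|h hs IH] Himp Hhs.
apply: IH => [|h' Hh']; last by apply: Hhs; right.
by apply: d_MP Himp _; apply: Hhs; left.
Qed.

End PropositionalRules.

(* Schemas below use at most six variables, so a tautology is checked by
   enumerating the values of variables 0 to 5. *)
Ltac by_taut hs c l :=
  apply: (@taut_rule _ _ hs c l);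
  [ let v := fresh "v" in move=> v /=;
    by case: (v 0); case: (v 1); case: (v 2); case: (v 3); case: (v 4); case: (v 5)
  | let h := fresh "h" in let Hh := fresh "Hh" in move=> h Hh;
    repeat (case: Hh => [<-|Hh]; first by []); case: Hh ].

Local Notation pv := (@PAtom nat).

Section DerivedRules.
Variables (At : countType) (L : logic).
Local Notation "|- a" := (derivable At L a) (at level 70).
Implicit Types a b c d : form At.

Lemma derivable_top : |- @FTop At.
Proof. by_taut (@nil (pform nat)) (@PTop nat) [:: @FTop At]. Qed.

Lemma imp_trans a b c : |- FImp a b -> |- FImp b c -> |- FImp a c.
Proof.
move=> hab hbc.
by_taut [:: pimp (pv 0) (pv 1); pimp (pv 1) (pv 2)] (pimp (pv 0) (pv 2)) [:: a; b; c].
Qed.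

Lemma iffI a b : |- FImp a b -> |- FImp b a -> |- FIff a b.
Proof.
move=> hab hba.
by_taut [:: pimp (pv 0) (pv 1); pimp (pv 1) (pv 0)] (piff (pv 0) (pv 1)) [:: a; b].
Qed.

Lemma iffLR a b : |- FIff a b -> |- FImp a b.
Proof. move=> h; by_taut [:: piff (pv 0) (pv 1)] (pimp (pv 0) (pv 1)) [:: a; b]. Qed.

Lemma iffRL a b : |- FIff a b -> |- FImp b a.
Proof. move=> h; by_taut [:: piff (pv 0) (pv 1)] (pimp (pv 1) (pv 0)) [:: a; b]. Qed.

Lemma iff_refl a : |- FIff a a.
Proof. by_taut (@nil (pform nat)) (piff (pv 0) (pv 0)) [:: a]. Qed.

Lemma iff_trans a b c : |- FIff a b -> |- FIff b c -> |- FIff a c.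
Proof.
move=> hab hbc.
by_taut [:: piff (pv 0) (pv 1); piff (pv 1) (pv 2)] (piff (pv 0) (pv 2)) [:: a; b; c].
Qed.

Lemma iff_mpr a b : |- FIff a b -> |- b -> |- a.
Proof. move=> hab hb; by_taut [:: piff (pv 0) (pv 1); pv 1] (pv 0) [:: a; b]. Qed.

Lemma iff_of_derivable a b : |- a -> |- b -> |- FIff a b.
Proof. move=> ha hb; by_taut [:: pv 0; pv 1] (piff (pv 0) (pv 1)) [:: a; b]. Qed.

Lemma iff_neg a b : |- FIff a b -> |- FIff (FNeg a) (FNeg b).
Proof.
move=> h; by_taut [:: piff (pv 0) (pv 1)] (piff (PNeg (pv 0)) (PNeg (pv 1))) [:: a; b].
Qed.

Lemma iff_and a b c d : |- FIff a b -> |- FIff c d -> |- FIff (FAnd a c) (FAnd b d).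
Proof.
move=> hab hcd; by_taut [:: piff (pv 0) (pv 1); piff (pv 2) (pv 3)]
  (piff (PAnd (pv 0) (pv 2)) (PAnd (pv 1) (pv 3))) [:: a; b; c; d].
Qed.

Lemma box_imp a b : |- FImp a b -> |- FImp (FBox a) (FBox b).
Proof. by move=> h; apply: d_MP (d_K _ _ a b) _; apply: d_Nec. Qed.

Lemma box_iff a b : |- FIff a b -> |- FIff (FBox a) (FBox b).
Proof. by move=> h; apply: iffI; apply: box_imp; [apply: iffLR h | apply: iffRL h]. Qed.

Lemma upd_imp D1 D2 i a b :
  |- FImp a b -> |- FImp (FUpd D1 D2 i a) (FUpd D1 D2 i b).
Proof. by move=> h; apply: d_MP (d_ax7 _ _ D1 D2 i a b) _; apply: d_nec_upd. Qed.

End DerivedRules.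

(** * Soundness *)

Section Soundness.
Variable At : countType.
Implicit Types (M : model At) (a b : form At).

Lemma sat_inst M w sigma t :
  sat At M w (inst sigma t) <-> peval (fun n => classicb (sat At M w (sigma n))) t.
Proof.
elim: t => [|n|t IH|t1 IH1 t2 IH2] /=.
- by [].
- by rewrite classicbP.
- by rewrite IH; case: (peval _ t); split=> // H; case: H.
- by rewrite IH1 IH2; case: (peval _ t1); case: (peval _ t2); intuition.
Qed.

Lemma sat_imp M w a b : sat At M w (FImp a b) <-> (sat At M w a -> sat At M w b).
Proof. by split=> [H Ha|H [/H]] //; apply: NNPP => Hb; apply: H. Qed.

Lemma sat_iff M w a b : sat At M w (FIff a b) <-> (sat At M w a <-> sat At M w b).
Proof.
change (sat At M w (FImp a b) /\ sat At M w (FImp b a) <-> (sat At M w a <-> sat At M w b));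
  by rewrite !sat_imp.
Qed.

Lemma sat_bigAnd M w l : sat At M w (bigAnd l) <-> forall x, List.In x l -> sat At M w x.
Proof.
elim: l => [|x l IH] /=; first by [].
by rewrite IH; split=> [[Hx Hl] y [<-|/Hl]|H] //; split=> [|y Hy]; apply: H; [left|right].
Qed.

Lemma ntclause_consistent (D : ntclause At) p :
  (true, p) \in (D : clause At) -> (false, p) \notin (D : clause At).
Proof.
move=> Hpos; apply/negP => Hneg; move: (ntc_ok D) => /hasP; apply.
by exists (true, p).
Qed.

Lemma sat_dyn_expand M w pi a s1 s2 :
  enumerates At (inC pi) s1 -> enumerates At (inC (PNeg pi)) s2 ->
  sat At M w (FDyn pi a) <->
  sat At M w (bigAnd [seq bigAnd [seq FUpd D1 D2 I0 a | D2 <- s2] | D1 <- s1]).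
Proof.
move=> [_ E1] [_ E2]; rewrite sat_bigAnd /=; split.
- move=> H x /In_map [D1 [<- /E1 HD1]] /=.
  by apply/sat_bigAnd => y /In_map [D2 [<- /E2 HD2]] /=; apply: H.
- move=> H D1 D2 /E1 HD1 /E2 HD2.
  have /sat_bigAnd HD1s := H _ (In_map_of _ HD1).
  by apply: (HD1s (FUpd D1 D2 I0 a)); apply: In_map_of.
Qed.

Section UpdatedAtom.
Variables (D : ntclause At) (p : At) (P : Prop).
Let updated := (false, p) \in (D : clause At) \/
  ((true, p) \notin (D : clause At) /\ (false, p) \notin (D : clause At) /\ P).

Lemma updated_atom_unchanged :
  (true, p) \notin (D : clause At) -> (false, p) \notin (D : clause At) -> updated <-> P.
Proof. by move=> Hpos /negbTE Hneg; rewrite /updated Hneg; split=> [[|[_ []]]|]; auto. Qed.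

Lemma updated_atom_true : (false, p) \in (D : clause At) -> updated.
Proof. by left. Qed.

Lemma updated_atom_false : (true, p) \in (D : clause At) -> ~ updated.
Proof.
move=> Hpos; have /negbTE Hneg := ntclause_consistent Hpos.
by rewrite /updated Hneg Hpos => -[|[]].
Qed.

End UpdatedAtom.

Lemma frame_cond_upd L M D1 D2 :
  frame_cond L (mworld M) (mrel M) ->
  frame_cond L (mworld (upd_model At M D1 D2)) (mrel (upd_model At M D1 D2)).
Proof.
rewrite /reflexive_rel /transitive_rel /euclidean_rel /symmetric_rel.
case: L => //= [H x|H x y z|H x y z|[H1 H2]|[H1 [H2 H3]]].
- exact: H.
- exact: H.
- exact: H.
- by split=> [x|x y z]; [apply: H1 | apply: H2].
- by split=> [x|]; [apply: H1 | split=> [x y|x y z]; [apply: H2 | apply: H3]].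
Qed.

Lemma soundness L a : derivable At L a ->
  forall M, frame_cond L (mworld M) (mrel M) -> forall w, sat At M w a.
Proof.
elim=> {a}.
- by move=> t sigma Ht M _ w; rewrite sat_inst.
- move=> a b M _ w; rewrite !sat_imp /= => Hab Ha v Hv.
  by apply: NNPP => Hb; apply: (Hab v Hv); split; first exact: Ha.
- by move=> a b _ IHab _ IHa M HM w; move: (IHab M HM w); rewrite sat_imp; apply; apply: IHa.
- by move=> a _ IH M HM w v _; apply: IH.
- move=> a; case: L => // _ M HM w; rewrite sat_imp /= => H; apply: H;
    [exact: HM | exact: HM.1 | exact: HM.1].
- move=> a; case: L => // _ M HM w; rewrite sat_imp /= => H v Hv u Hu; apply: H;
    [exact: HM Hv Hu | exact: HM.2 Hv Hu | exact: HM.2.2 Hv Hu].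
- move=> a; case: L => // _ M HM w; rewrite sat_imp /= => H v Hv Hnot;
    apply: H => u Hu; apply: Hnot.
  + exact: HM Hv Hu.
  + by case: HM => _ [Hsym Htrans]; apply: Htrans (Hsym _ _ Hv) Hu.
- by move=> pi a s1 s2 Hs1 Hs2 M _ w; rewrite sat_iff; apply: sat_dyn_expand.
- by move=> D1 D2 p M _ w; rewrite sat_iff.
- by move=> D1 D2 p ? ? M _ w; rewrite sat_iff; apply: updated_atom_unchanged.
- by move=> D1 D2 p ? M _ w; rewrite sat_iff; split=> // _; apply: updated_atom_true.
- by move=> D1 D2 p Hp M _ w; rewrite sat_iff /=; split=> [/(updated_atom_false Hp)|/(_ I)].
- by move=> D1 D2 p ? ? M _ w; rewrite sat_iff; apply: updated_atom_unchanged.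
- by move=> D1 D2 p ? M _ w; rewrite sat_iff; split=> // _; apply: updated_atom_true.
- by move=> D1 D2 p Hp M _ w; rewrite sat_iff /=; split=> [/(updated_atom_false Hp)|/(_ I)].
- by move=> D1 D2 i a M _ w; rewrite sat_iff.
- by move=> D1 D2 i a b M _ w; rewrite sat_iff.
- move=> D1 D2 i a M _ w; rewrite sat_iff /=.
  split=> [H v Hv|H [v j] /= Hv]; first by split; [|split]; apply: H.
  by case: (H v Hv) => [? [? ?]]; case: j.
- move=> D1 D2 i a b M _ w; rewrite !sat_imp.
  exact: (proj1 (@sat_imp (upd_model At M D1 D2) (w, i) a b)).
- by move=> D1 D2 i a _ IH M HM w; apply: IH; apply: frame_cond_upd.
Qed.

End Soundness.

(** * Finiteness of the clause sets C(pi) *)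

HB.instance Definition _ (At : countType) := [isSub for @ntc At].
HB.instance Definition _ (At : countType) := [Equality of ntclause At by <:].

Section ClauseEnumeration.
Variable At : countType.
Local Open Scope fset_scope.

Fixpoint patoms (p : pform At) : seq At :=
  match p with
  | PTop => [::]
  | PAtom a => [:: a]
  | PNeg q => patoms q
  | PAnd q r => patoms q ++ patoms r
  end.

Lemma eq_peval (v v' : At -> bool) p :
  {in patoms p, v =1 v'} -> peval v p = peval v' p.
Proof.
elim: p => [|a|q IH|q IHq r IHr] /= Hvv'.
- by [].
- by apply: Hvv'; rewrite inE.
- by rewrite IH.
- by rewrite IHq ?IHr // => a Ha; apply: Hvv'; rewrite mem_cat Ha ?orbT.
Qed.

Lemma lit_same_atom (l l' : lit At) : l' != l -> l'.2 = l.2 -> l' = lneg l.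
Proof.
case: l l' => [b p] [b' p'] /= Hne Ep; move: Hne; rewrite Ep /lneg.
by case: b; case: b'; rewrite ?eqxx.
Qed.

(* If the atom of [l] does not occur in [pi], the valuation flipping that atom
   so as to falsify [l] still satisfies [pi], so [D `\ l] would be entailed. *)
Lemma inC_atoms pi (D : ntclause At) l :
  inC pi D -> l \in (D : clause At) -> l.2 \in patoms pi.
Proof.
move=> [Hent Hmin] Hl; apply: NNPP => /negP Hnotin.
apply: (Hmin ((D : clause At) `\ l) (fproperD1 Hl)) => v Hv.
pose v' a := if a == l.2 then ~~ l.1 else v a.
have Hv' : peval v' pi.
  by rewrite -(@eq_peval v) // => a Ha; rewrite /v'; case: eqP => // E; rewrite -E Ha in Hnotin.
have [l' Hl'D Hl'v] := Hent v' Hv'.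
have Hne : l' != l by apply: contraTneq Hl'v => ->; rewrite /litval /v' eqxx; case: (l.1).
have Hne2 : l'.2 != l.2.
  apply/eqP => E2; move: (ntc_ok D) => /hasP; apply; exists l => //.
  by rewrite -(lit_same_atom Hne E2).
exists l'; first by rewrite in_fsetD1 Hne Hl'D.
by move: Hl'v; rewrite /litval /v' (negbTE Hne2).
Qed.

Lemma enumerates_inC pi : exists s, enumerates At (inC pi) s.
Proof.
pose lits : clause At := seq_fset tt [seq (b, p) | b <- [:: true; false], p <- patoms pi].
pose candidates := pmap insub (enum_fset (fpowerset lits)) : seq (ntclause At).
have Hcand D : inC pi D -> List.In D candidates.
  move=> HD; apply: mem_In; rewrite mem_pmap_sub fpowersetE.
  apply/fsubsetP => l Hl; rewrite seq_fsetE; have := inC_atoms HD Hl.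
  by case: l {Hl} => [[] p] Hp; apply/allpairsP; [exists (true, p) | exists (false, p)];
    rewrite ?inE.
exists (List.nodup (@eq_comparable _) (List.filter (fun D => classicb (inC pi D)) candidates)).
split=> [|D]; first exact: List.NoDup_nodup.
rewrite List.nodup_In List.filter_In; split; first by case=> _ /classicbP.
by move=> HD; split; [apply: Hcand | apply/classicbP].
Qed.

End ClauseEnumeration.

(** * Reduction to update-free formulas *)

Section Reduction.
Variable At : countType.
Implicit Types a b : form At.

Definition update : Type := (ntclause At * ntclause At * idx)%type.

(* The head of the stack is the innermost update. *)
Fixpoint under (s : seq update) a : form At :=
  if s is (D1, D2, i) :: s' then under s' (FUpd D1 D2 i a) else a.

Definition and3 (f : idx -> form At) : form At := FAnd (f I0) (FAnd (f I1) (f I2)).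

(* The conjunction of [k s'] over the 3^n stacks [s'] having the clauses of
   [s] and arbitrary indices. *)
Fixpoint all_reindexed (s : seq update) (k : seq update -> form At) : form At :=
  if s is (D1, D2, _) :: s'
  then all_reindexed s' (fun t => and3 (fun j => k ((D1, D2, j) :: t)))
  else k [::].

Definition upd_lit (D : ntclause At) p x : form At :=
  if (false, p) \in (D : clause At) then FTop
  else if (true, p) \in (D : clause At) then FBot else x.

Fixpoint reduce_atom (s : seq update) p : form At :=
  match s with
  | [::] => FAtom p
  | (_, _, I0) :: s' => reduce_atom s' p
  | (D1, _, I1) :: s' => upd_lit D1 p (reduce_atom s' p)
  | (_, D2, I2) :: s' => upd_lit D2 p (reduce_atom s' p)
  end.

Definition clauses_of (pi : pform At) : seq (ntclause At) :=
  proj1_sig (constructive_indefinite_description _ (enumerates_inC pi)).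

Lemma clauses_ofP pi : enumerates At (inC pi) (clauses_of pi).
Proof. exact: proj2_sig (constructive_indefinite_description _ (enumerates_inC pi)). Qed.

Fixpoint reduce a (s : seq update) {struct a} : form At :=
  match a with
  | FTop => FTop
  | FAtom p => reduce_atom s p
  | FNeg b => FNeg (reduce b s)
  | FAnd b c => FAnd (reduce b s) (reduce c s)
  | FBox b => FBox (all_reindexed s (reduce b))
  | FDyn pi b => bigAnd [seq bigAnd [seq reduce b ((D1, D2, I0) :: s)
                                    | D2 <- clauses_of (PNeg pi)] | D1 <- clauses_of pi]
  | FUpd D1 D2 i b => reduce b ((D1, D2, i) :: s)
  end.

Fixpoint update_free a : bool :=
  match a with
  | FTop | FAtom _ => true
  | FNeg b | FBox b => update_free b
  | FAnd b c => update_free b && update_free c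
  | FDyn _ _ | FUpd _ _ _ _ => false
  end.

Lemma update_free_bigAnd_map (T : Type) (f : T -> form At) s :
  (forall x, update_free (f x)) -> update_free (bigAnd (map f s)).
Proof. by move=> Hf; elim: s => //= x s ->; rewrite Hf. Qed.

Lemma update_free_all_reindexed s k :
  (forall t, update_free (k t)) -> update_free (all_reindexed s k).
Proof. by elim: s k => [|[[D1 D2] i] s IH] k Hk //=; apply: IH => t; rewrite /= !Hk. Qed.

Lemma update_free_reduce_atom s p : update_free (reduce_atom s p).
Proof.
elim: s => [|[[D1 D2] []] s IH] //=; rewrite /upd_lit;
  by case: ifP => _ //; case: ifP.
Qed.

Lemma update_free_reduce a s : update_free (reduce a s).
Proof.
elim: a s => [|p|b IH|b IHb c IHc|b IH|pi b IH|D1 D2 i b IH] s //=.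
- exact: update_free_reduce_atom.
- by rewrite IHb IHc.
- exact: update_free_all_reindexed.
- by apply: update_free_bigAnd_map => D1; apply: update_free_bigAnd_map.
Qed.

Variable L : logic.
Local Notation "|- a" := (derivable At L a) (at level 70).

Lemma under_imp s a b : |- FImp a b -> |- FImp (under s a) (under s b).
Proof. by elim: s a b => [|[[D1 D2] i] s IH] a b H //=; apply: IH; apply: upd_imp. Qed.

Lemma under_iff s a b : |- FIff a b -> |- FIff (under s a) (under s b).
Proof. by move=> h; apply: iffI; apply: under_imp; [apply: iffLR h | apply: iffRL h]. Qed.

Lemma under_nec s a : |- a -> |- under s a.
Proof. by elim: s a => [|[[D1 D2] i] s IH] a H //=; apply: IH; apply: d_nec_upd. Qed.

Lemma under_neg s a : |- FIff (under s (FNeg a)) (FNeg (under s a)).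
Proof.
elim: s a => [|[[D1 D2] i] s IH] a /=; first exact: iff_refl.
by apply: iff_trans (IH _); apply: under_iff; apply: d_ax4.
Qed.

Lemma under_and s a b : |- FIff (under s (FAnd a b)) (FAnd (under s a) (under s b)).
Proof.
elim: s a b => [|[[D1 D2] i] s IH] a b /=; first exact: iff_refl.
by apply: iff_trans (IH _ _); apply: under_iff; apply: d_ax5.
Qed.

Lemma under_top s : |- FIff (under s FTop) FTop.
Proof. by apply: iff_of_derivable; [apply: under_nec|]; apply: derivable_top. Qed.

Lemma under_bot s : |- FIff (under s FBot) FBot.
Proof. by apply: iff_trans (under_neg _ _) _; apply: iff_neg; apply: under_top. Qed.

Lemma under_and3 s f : |- FIff (under s (and3 f)) (and3 (fun j => under s (f j))).
Proof.
apply: iff_trans (under_and _ _ _) _; apply: iff_and; first exact: iff_refl.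
exact: under_and.
Qed.

Lemma and3_iff f g : (forall j, |- FIff (f j) (g j)) -> |- FIff (and3 f) (and3 g).
Proof. by move=> H; apply: iff_and => //; apply: iff_and. Qed.

Lemma all_reindexed_iff s k k' :
  (forall t, |- FIff (k t) (k' t)) -> |- FIff (all_reindexed s k) (all_reindexed s k').
Proof.
elim: s k k' => [|[[D1 D2] i] s IH] k k' H //=.
by apply: IH => t; apply: and3_iff => j; apply: H.
Qed.

Lemma under_box s a :
  |- FIff (under s (FBox a)) (FBox (all_reindexed s (fun t => under t a))).
Proof.
elim: s a => [|[[D1 D2] i] s IH] a /=; first exact: iff_refl.
apply: iff_trans; first by apply: under_iff; apply: d_ax6.
apply: iff_trans (IH _) _; apply: box_iff; apply: all_reindexed_iff => t.
exact: (under_and3 t (fun j => FUpd D1 D2 j a)).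
Qed.

Lemma bigAnd_map_iff (T : Type) (f g : T -> form At) s :
  (forall x, List.In x s -> |- FIff (f x) (g x)) ->
  |- FIff (bigAnd (map f s)) (bigAnd (map g s)).
Proof.
elim: s => [|x s IH] H /=; first exact: iff_refl.
by apply: iff_and; [apply: H; left | apply: IH => y Hy; apply: H; right].
Qed.

Lemma under_bigAnd (T : Type) s (f : T -> form At) l :
  |- FIff (under s (bigAnd (map f l))) (bigAnd (map (fun x => under s (f x)) l)).
Proof.
elim: l => [|x l IH] /=; first exact: under_top.
by apply: iff_trans (under_and _ _ _) _; apply: iff_and => //; apply: iff_refl.
Qed.

Lemma under_upd_lit s (D : ntclause At) p a (ax : form At) :
  ((false, p) \in (D : clause At) -> |- FIff ax FTop) ->
  ((true, p) \in (D : clause At) -> |- FIff ax FBot) ->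
  ((true, p) \notin (D : clause At) -> (false, p) \notin (D : clause At) ->
     |- FIff ax (FAtom p)) ->
  |- FIff (under s (FAtom p)) a -> |- FIff (under s ax) (upd_lit D p a).
Proof.
move=> Htop Hbot Hatom Ha; rewrite /upd_lit.
case: ifP => Hneg; first exact: iff_trans (under_iff s (Htop Hneg)) (under_top s).
case: ifP => Hpos; first exact: iff_trans (under_iff s (Hbot Hpos)) (under_bot s).
by apply: iff_trans (under_iff s (Hatom _ _)) Ha; rewrite ?Hneg ?Hpos.
Qed.

Lemma under_atom s p : |- FIff (under s (FAtom p)) (reduce_atom s p).
Proof.
elim: s => [|[[D1 D2] []] s IH] /=; first exact: iff_refl.
- by apply: iff_trans IH; apply: under_iff; apply: d_ax2.
- by apply: under_upd_lit IH; [apply: d_ax3_1b | apply: d_ax3_1c | apply: d_ax3_1a].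
- by apply: under_upd_lit IH; [apply: d_ax3_2b | apply: d_ax3_2c | apply: d_ax3_2a].
Qed.

Lemma reduce_correct a s : |- FIff (under s a) (reduce a s).
Proof.
elim: a s => [|p|b IH|b IHb c IHc|b IH|pi b IH|D1 D2 i b IH] s /=.
- exact: under_top.
- exact: under_atom.
- by apply: iff_trans (under_neg _ _) _; apply: iff_neg.
- by apply: iff_trans (under_and _ _ _) _; apply: iff_and.
- by apply: iff_trans (under_box _ _) _; apply: box_iff; apply: all_reindexed_iff.
- apply: iff_trans.
    by apply: under_iff; apply: (d_ax1 _ _ pi b _ _ (clauses_ofP pi) (clauses_ofP (PNeg pi))).
  apply: iff_trans (under_bigAnd _ _ _) _; apply: bigAnd_map_iff => D1 _.
  apply: iff_trans (under_bigAnd _ _ _) _; apply: bigAnd_map_iff => D2 _.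
  exact: (IH ((D1, D2, I0) :: s)).
- exact: (IH ((D1, D2, i) :: s)).
Qed.

End Reduction.

(** * Canonical model for update-free formulas *)

Section UpdateFreeEnumeration.
Variable At : countType.

Fixpoint encode (a : form At) : GenTree.tree At :=
  match a with
  | FAtom p => GenTree.Leaf p
  | FNeg b => GenTree.Node 1 [:: encode b]
  | FAnd b c => GenTree.Node 2 [:: encode b; encode c]
  | FBox b => GenTree.Node 3 [:: encode b]
  | _ => GenTree.Node 0 [::]
  end.

Fixpoint decode (t : GenTree.tree At) : option (form At) :=
  match t with
  | GenTree.Leaf p => Some (FAtom p)
  | GenTree.Node 0 [::] => Some FTop
  | GenTree.Node 1 [:: t1] => omap (@FNeg At) (decode t1)
  | GenTree.Node 2 [:: t1; t2] =>
      if (decode t1, decode t2) is (Some b, Some c) then Some (FAnd b c) else None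
  | GenTree.Node 3 [:: t1] => omap (@FBox At) (decode t1)
  | _ => None
  end.

Lemma encodeK a : update_free a -> decode (encode a) = Some a.
Proof.
elim: a => [|p|b IH|b IHb c IHc|b IH|pi b IH|D1 D2 i b IH] //= H.
- by rewrite IH.
- by case/andP: H => Hb Hc; rewrite IHb ?IHc.
- by rewrite IH.
Qed.

Definition nth_update_free (n : nat) : form At :=
  if choice.unpickle n is Some t then odflt FTop (decode t) else FTop.

Lemma nth_update_free_surj a : update_free a -> exists n, nth_update_free n = a.
Proof. by move=> Ha; exists (choice.pickle (encode a)); rewrite /nth_update_free choice.pickleK encodeK. Qed.

End UpdateFreeEnumeration.

Section MaximalConsistentSets.
Variables (At : countType) (L : logic).
Local Notation "|- a" := (derivable At L a) (at level 70).
Implicit Types (a b : form At) (G : form At -> Prop).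

Definition inconsistent G :=
  exists l, (forall x, List.In x l -> G x) /\ |- FNeg (bigAnd l).
Definition consistent G := ~ inconsistent G.
Definition maximal_consistent G :=
  consistent G /\ forall a, update_free a -> G a \/ G (FNeg a).

Definition add_form G a : form At -> Prop := fun x => G x \/ x = a.

Lemma bigAnd_add_form G a l : (forall x, List.In x l -> add_form G a x) ->
  exists l', (forall x, List.In x l' -> G x) /\ |- FImp (FAnd (bigAnd l') a) (bigAnd l).
Proof.
elim: l => [|x l IH] Hl /=.
  by exists [::]; split=> //; by_taut (@nil (pform nat)) (pimp (PAnd PTop (pv 0)) PTop) [:: a].
have [y Hy|l' [Hl' Himp]] := IH; first by apply: Hl; right.
case: (Hl x (or_introl erefl)) => [Gx|->].
- exists (x :: l'); split=> [y [<-|/Hl'] //|].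
  by_taut [:: pimp (PAnd (pv 0) (pv 1)) (pv 2)]
    (pimp (PAnd (PAnd (pv 3) (pv 0)) (pv 1)) (PAnd (pv 3) (pv 2))) [:: bigAnd l'; a; bigAnd l; x].
- exists l'; split=> //.
  by_taut [:: pimp (PAnd (pv 0) (pv 1)) (pv 2)]
    (pimp (PAnd (pv 0) (pv 1)) (PAnd (pv 1) (pv 2))) [:: bigAnd l'; a; bigAnd l].
Qed.

Lemma bigAnd_cat l1 l2 : |- FImp (bigAnd (l1 ++ l2)) (FAnd (bigAnd l1) (bigAnd l2)).
Proof.
elim: l1 => [|x l1 IH] /=.
  by_taut (@nil (pform nat)) (pimp (pv 0) (PAnd PTop (pv 0))) [:: bigAnd l2].
by_taut [:: pimp (pv 2) (PAnd (pv 0) (pv 1))]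
  (pimp (PAnd (pv 3) (pv 2)) (PAnd (PAnd (pv 3) (pv 0)) (pv 1)))
  [:: bigAnd l1; bigAnd l2; bigAnd (l1 ++ l2); x].
Qed.

Lemma consistent_add_form G a : consistent G ->
  consistent (add_form G a) \/ consistent (add_form G (FNeg a)).
Proof.
move=> HG; apply: NNPP => Hboth; apply: HG.
have [[l1 [Hl1 Hd1]] [l2 [Hl2 Hd2]]] :
    inconsistent (add_form G a) /\ inconsistent (add_form G (FNeg a)).
  by split; apply: NNPP => H; apply: Hboth; [left|right].
have [l1' [Hl1' Himp1]] := bigAnd_add_form Hl1.
have [l2' [Hl2' Himp2]] := bigAnd_add_form Hl2.
exists (l1' ++ l2'); split=> [x Hx|].
  by case: (List.in_app_or _ _ _ Hx) => [/Hl1'|/Hl2'].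
have Hcat := bigAnd_cat l1' l2'.
by_taut [:: pimp (PAnd (pv 0) (pv 1)) (pv 2); PNeg (pv 2);
            pimp (PAnd (pv 3) (PNeg (pv 1))) (pv 4); PNeg (pv 4);
            pimp (pv 5) (PAnd (pv 0) (pv 3))] (PNeg (pv 5))
  [:: bigAnd l1'; a; bigAnd l1; bigAnd l2'; bigAnd l2; bigAnd (l1' ++ l2')].
Qed.

Fixpoint lindenbaum_chain G0 (n : nat) : form At -> Prop :=
  if n is n'.+1 then
    let G := lindenbaum_chain G0 n' in let a := nth_update_free At n' in
    if classicb (consistent (add_form G a)) then add_form G a else add_form G (FNeg a)
  else G0.

Lemma lindenbaum_chain_mono G0 m n x :
  m <= n -> lindenbaum_chain G0 m x -> lindenbaum_chain G0 n x.
Proof.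
move=> /subnKC <-; elim: (n - m) => [|k IH] H; first by rewrite addn0.
by rewrite addnS /=; case: classicb; left; apply: IH.
Qed.

Lemma lindenbaum_chain_consistent G0 n :
  consistent G0 -> consistent (lindenbaum_chain G0 n).
Proof.
move=> H0; elim: n => [|n IH] //=.
case E: classicb; first by move/classicbP: E.
have [Ha|//] := consistent_add_form (nth_update_free At n) IH.
by move: E; rewrite (proj2 (classicbP _) Ha).
Qed.

Lemma lindenbaum G0 : consistent G0 ->
  exists G, maximal_consistent G /\ forall x, G0 x -> G x.
Proof.
move=> H0; exists (fun x => exists n, lindenbaum_chain G0 n x).
split; last by move=> x Hx; exists 0.
split.
- move=> [l [Hl Hd]].
  have [n Hn] : exists n, forall x, List.In x l -> lindenbaum_chain G0 n x.
    elim: l Hl {Hd} => [|y l IH] Hl; first by exists 0.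
    have [x Hx|n Hn] := IH; first by apply: Hl; right.
    have [m Hm] := Hl y (or_introl erefl).
    exists (maxn m n) => x [<-|/Hn].
    + exact: lindenbaum_chain_mono (leq_maxl m n) Hm.
    + exact: lindenbaum_chain_mono (leq_maxr m n).
  by apply: (@lindenbaum_chain_consistent G0 n H0); exists l.
- move=> a Ha; have [n En] := nth_update_free_surj Ha.
  have : lindenbaum_chain G0 n.+1 a \/ lindenbaum_chain G0 n.+1 (FNeg a).
    by rewrite /= En; case: classicb; [left|right]; right.
  by case=> H; [left|right]; exists n.+1.
Qed.

Section MaximalConsistent.
Variables (G : form At -> Prop) (HG : maximal_consistent G).

Lemma maximal_consistent_derive l b : (forall x, List.In x l -> G x) ->
  |- FImp (bigAnd l) b -> update_free b -> G b.
Proof.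
move=> Hl Hd Hb; have [//|Hn] := HG.2 b Hb; exfalso; apply: HG.1.
exists (FNeg b :: l); split; first by move=> x [<-|/Hl].
by_taut [:: pimp (pv 0) (pv 1)] (PNeg (PAnd (PNeg (pv 1)) (pv 0))) [:: bigAnd l; b].
Qed.

Lemma maximal_consistent_derive1 a b :
  G a -> |- FImp a b -> update_free b -> G b.
Proof.
move=> Ha Hab; apply: (@maximal_consistent_derive [:: a]); first by move=> x [<-|].
by by_taut [:: pimp (pv 0) (pv 1)] (pimp (PAnd (pv 0) PTop) (pv 1)) [:: a; b].
Qed.

Lemma maximal_consistent_contra a : G a -> G (FNeg a) -> False.
Proof.
move=> Ha Hna; apply: HG.1; exists [:: a; FNeg a]; split; first by move=> x [<-|[<-|]].
by_taut (@nil (pform nat)) (PNeg (PAnd (pv 0) (PAnd (PNeg (pv 0)) PTop))) [:: a].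
Qed.

Lemma maximal_consistent_neg a : update_free a -> G (FNeg a) <-> ~ G a.
Proof.
move=> Ha; split=> [Hna Ha'|Hna]; first exact: maximal_consistent_contra Ha' Hna.
by case: (HG.2 a Ha).
Qed.

Lemma maximal_consistent_and a b : update_free a -> update_free b ->
  G (FAnd a b) <-> G a /\ G b.
Proof.
move=> Ha Hb; split=> [Hab|[Ga Gb]].
- split; apply: (maximal_consistent_derive1 Hab) => //.
  + by by_taut (@nil (pform nat)) (pimp (PAnd (pv 0) (pv 1)) (pv 0)) [:: a; b].
  + by by_taut (@nil (pform nat)) (pimp (PAnd (pv 0) (pv 1)) (pv 1)) [:: a; b].
- apply: (@maximal_consistent_derive [:: a; b]); first by move=> x [<-|[<-|]].
  + by_taut (@nil (pform nat))
      (pimp (PAnd (pv 0) (PAnd (pv 1) PTop)) (PAnd (pv 0) (pv 1))) [:: a; b].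
  + by rewrite /= Ha Hb.
Qed.

End MaximalConsistent.

End MaximalConsistentSets.

Section Completeness.
Variables (At : countType) (L : logic).
Local Notation "|- a" := (derivable At L a) (at level 70).
Implicit Types a b : form At.

Lemma box_and a b : |- FImp (FAnd (FBox a) (FBox b)) (FBox (FAnd a b)).
Proof.
have Hpair : |- FImp a (FImp b (FAnd a b)).
  by by_taut (@nil (pform nat)) (pimp (pv 0) (pimp (pv 1) (PAnd (pv 0) (pv 1)))) [:: a; b].
have Hbox := box_imp Hpair.
have HK := d_K At L b (FAnd a b).
by_taut [:: pimp (pv 0) (pv 2); pimp (pv 2) (pimp (pv 1) (pv 3))] (pimp (PAnd (pv 0) (pv 1)) (pv 3))
  [:: FBox a; FBox b; FBox (FImp b (FAnd a b)); FBox (FAnd a b)].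
Qed.

Lemma box_bigAnd l : |- FImp (bigAnd (map (@FBox At) l)) (FBox (bigAnd l)).
Proof.
elim: l => [|x l IH] /=.
  have Hbox : |- FBox (@FTop At) by apply: d_Nec; apply: derivable_top.
  by_taut [:: pv 0] (pimp PTop (pv 0)) [:: FBox (@FTop At)].
have Hand := box_and x (bigAnd l).
by_taut [:: pimp (pv 1) (pv 2); pimp (PAnd (pv 0) (pv 2)) (pv 3)] (pimp (PAnd (pv 0) (pv 1)) (pv 3))
  [:: FBox x; bigAnd (map (@FBox At) l); FBox (bigAnd l); FBox (FAnd x (bigAnd l))].
Qed.

Definition cworld := {G : form At -> Prop | maximal_consistent L G}.
Definition crel (G D : cworld) : Prop :=
  forall b, update_free b -> sval G (FBox b) -> sval D b.
Definition cmodel : model At :=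
  Model cworld crel (fun p (G : cworld) => sval G (FAtom p)).

Lemma box_witness_consistent (G : cworld) b : update_free b -> ~ sval G (FBox b) ->
  consistent L (add_form (fun x => update_free x /\ sval G (FBox x)) (FNeg b)).
Proof.
move=> Hb Hnbox [l [Hl Hd]].
have [l' [Hl' Himp]] := bigAnd_add_form L Hl.
have Hder : |- FImp (bigAnd l') b.
  by_taut [:: pimp (PAnd (pv 0) (PNeg (pv 1))) (pv 2); PNeg (pv 2)] (pimp (pv 0) (pv 1))
    [:: bigAnd l'; b; bigAnd l].
apply: Hnbox; apply: (maximal_consistent_derive (svalP G) (l := map (@FBox At) l')).
- by move=> _ /In_map [x [<- /Hl' []]].
- exact: imp_trans (box_bigAnd l') (box_imp Hder).
- exact: Hb.
Qed.

Lemma canonical_truth a : update_free a ->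
  forall G : cworld, sat At cmodel G a <-> sval G a.
Proof.
elim: a => [|p|b IH|b IHb c IHc|b IH|pi b IH|D1 D2 i b IH] //= Ha G.
- split=> // _; apply: (maximal_consistent_derive (svalP G) (l := [::])) => //.
  by_taut (@nil (pform nat)) (pimp PTop PTop) [:: @FTop At].
- by rewrite (maximal_consistent_neg (svalP G) Ha) IH.
- by case/andP: Ha => Hb Hc; rewrite (maximal_consistent_and (svalP G) Hb Hc) IHb ?IHc.
- split=> [Hbox|HG D HGD]; last by apply/IH => //; apply: HGD.
  apply: NNPP => /(box_witness_consistent Ha) /lindenbaum [D [HD HsubD]].
  have /IH /= /(_ Ha) Db : sat At cmodel (exist _ D HD : cworld) b.
    by apply: Hbox => x Hx HGx; apply: HsubD; left.
  by apply: (maximal_consistent_contra HD Db); apply: HsubD; right.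
Qed.

Lemma crel_refl : has_T L -> reflexive_rel cworld crel.
Proof.
move=> HT G b Hb HG; apply: (maximal_consistent_derive1 (svalP G) HG) => //.
exact: d_T.
Qed.

Lemma crel_trans : has_4 L -> transitive_rel cworld crel.
Proof.
move=> H4 G D E HGD HDE b Hb HG; apply: HDE => //; apply: HGD => //.
by apply: (maximal_consistent_derive1 (svalP G) HG) => //; apply: d_4.
Qed.

Lemma crel_eucl : has_5 L -> euclidean_rel cworld crel.
Proof.
move=> H5 G D E HGD HGE b Hb HD.
have [//|HGn] := (svalP G).2 (FBox b) Hb; first exact: HGE.
exfalso; apply: (maximal_consistent_contra (svalP D) HD); apply: HGD => //.
by apply: (maximal_consistent_derive1 (svalP G) HGn) => //; apply: d_5.
Qed.

Lemma canonical_frame_cond : frame_cond L cworld crel.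
Proof.
have crel_symm : has_T L -> has_5 L -> symmetric_rel cworld crel.
  by move=> HT H5 u v Huv; apply: (crel_eucl H5 Huv); apply: crel_refl.
case E: L => /=.
- by [].
- by apply: crel_refl; rewrite E.
- by apply: crel_trans; rewrite E.
- by apply: crel_eucl; rewrite E.
- by split; [apply: crel_refl | apply: crel_trans]; rewrite E.
- split; first by apply: crel_refl; rewrite E.
  split; first by apply: crel_symm; rewrite E.
  by apply: crel_trans; rewrite E.
Qed.

Lemma not_derivable_consistent a : ~ |- a -> consistent L (fun x => x = FNeg a).
Proof.
move=> Hna [l [Hl Hd]].
have [l' [Hl' Himp]] := bigAnd_add_form L (G := fun _ => False) (a := FNeg a) (l := l)
  (fun x Hx => or_intror (Hl x Hx)).
case: l' Hl' Himp => [|y l'] Hl' Himp; last by case: (Hl' y (or_introl erefl)).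
apply: Hna; by_taut [:: pimp (PAnd PTop (PNeg (pv 0))) (pv 1); PNeg (pv 1)] (pv 0)
  [:: a; bigAnd l].
Qed.

Lemma update_free_completeness a : update_free a -> valid_in At L a -> |- a.
Proof.
move=> Ha Hvalid; apply: NNPP => /not_derivable_consistent /lindenbaum [G [HG HsubG]].
have /(canonical_truth Ha) /= Ga :=
  Hvalid cmodel (inhabits (exist _ G HG)) canonical_frame_cond (exist _ G HG).
by apply: (maximal_consistent_contra HG Ga); apply: HsubG.
Qed.

End Completeness.

Theorem theorem2 (At : countType) (HAt : inhabited At) (L : logic) (phi : form At) :
  valid_in At L phi <-> derivable At L phi.
Proof.
split=> [Hvalid|Hder M _ HM w]; last exact: soundness Hder M HM w.
have Hred := reduce_correct L phi [::].
apply: (iff_mpr Hred); apply: update_free_completeness; first exact: update_free_reduce.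
move=> M _ HM w; have := soundness Hred HM w; rewrite sat_iff => <-.
exact: Hvalid.
Qed.
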